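(* In the social learning model, suppose that $G_-$ and $G_+$ are continuous and that the left tail of $G_-$ is convex and differentiable. Suppose $f\colon\mathbb{R}_{>0}\to\mathbb{R}_{>0}$ satisfies $f'(t)=G_-(-f(t))$ for all sufficiently large $t$. Then, conditional on $\theta=+1$, $$\lim_{t\to\infty}\frac{\ell_t}{f(t)}=1$$ with probability $1$.
   Context: Social learning model. A state $\theta\in\{-1,+1\}$ is drawn with $\mathbb{P}(\theta=+1)=\mathbb{P}(\theta=-1)=1/2$. Agents $t=1,2,\dots$ receive private signals $s_t\in\mathbb{R}$ that are i.i.d. conditionally on $\theta$, with CDF $F_+$ if $\theta=+1$ and $F_-$ if $\theta=-1$; $F_+$ and $F_-$ are mutually absolutely continuous. Let $L_t=\log\frac{\mathbb{P}(\theta=+1\mid s_t)}{\mathbb{P}(\theta=-1\mid s_t)}$ be the private log-likelihood ratio, and let $G_+$, $G_-$ denote the CDFs of $L_t$ conditional on $\theta=+1$, $\theta=-1$ respectively. Signals are assumed unbounded: for every $M\in\mathbb{R}$, $\mathbb{P}(L_t>M)>0$ and $\mathbb{P}(L_t<-M)>0$. Agent $t$ observes $a_1,\dots,a_{t-1}$ and her own signal and chooses $a_t\in\{-1,+1\}$ (utility $1$ if $a_t=\theta$, else $0$). The public belief is $\mu_t=\mathbb{P}(\theta=+1\mid a_1,\dots,a_{t-1})$ and $\ell_t=\log\frac{\mu_t}{1-\mu_t}$ (so $\ell_1=0$). In equilibrium $a_t=+1$ iff $\ell_t+L_t>0$, and otherwise $a_t=-1$. Consequently $\ell_{t+1}=\ell_t+D_+(\ell_t)$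 if $a_t=+1$ and $\ell_{t+1}=\ell_t+D_-(\ell_t)$ if $a_t=-1$, where $D_+(x)=\log\frac{1-G_+(-x)}{1-G_-(-x)}$ and $D_-(x)=\log\frac{G_+(-x)}{G_-(-x)}$. We write $\mathbb{P}_+(\cdot)=\mathbb{P}(\cdot\mid\theta=+1)$ and $\mathbb{E}_+$ for the corresponding expectation. ''The left tail of $G_-$ is convex and differentiable'' means: there exists $x_0\in\mathbb{R}$ such that the restriction of $G_-$ to $(-\infty,x_0)$ is convex and differentiable. *)

From Stdlib Require Import Reals Lra List.
Open Scope R_scope.

(* G is a CDF on R (convention G x = P(L <= x)). *)
Definition is_cdf (G : R -> R) : Prop :=
  (forall x y, x <= y -> G x <= G y) /\
  (forall e, 0 < e -> exists M, forall x, x <= M -> G x < e) /\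
  (forall e, 0 < e -> exists M, forall x, M <= x -> 1 - e < G x).

(* Gp, Gm are the conditional CDFs of a private log-likelihood ratio L:
   the law of L under theta=+1 has density e^x w.r.t. its law under
   theta=-1, i.e. for every interval (a,b],
   e^a * mu_-((a,b]) <= mu_+((a,b]) <= e^b * mu_-((a,b]). *)
Definition llr_pair (Gp Gm : R -> R) : Prop :=
  forall a b, a < b ->
    exp a * (Gm b - Gm a) <= Gp b - Gp a /\
    Gp b - Gp a <= exp b * (Gm b - Gm a).

(* Unbounded signals: for every M, P(L > M) > 0 and P(L < -M) > 0,
   where P is the unconditional law (theta uniform). *)
Definition unbounded_signals (Gp Gm : R -> R) : Prop :=
  forall M, 0 < 1 - (Gp M + Gm M) / 2 /\
            exists x, x < - M /\ 0 < (Gp x + Gm x) / 2.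

Definition left_tail_convex_differentiable (G : R -> R) : Prop :=
  exists x0,
    (forall x y l, x < x0 -> y < x0 -> 0 <= l <= 1 ->
        G (l * x + (1 - l) * y) <= l * G x + (1 - l) * G y) /\
    (forall x, x < x0 -> exists d, derivable_pt_lim G x d).

Definition Dplus (Gp Gm : R -> R) (x : R) : R :=
  ln ((1 - Gp (- x)) / (1 - Gm (- x))).
Definition Dminus (Gp Gm : R -> R) (x : R) : R :=
  ln (Gp (- x) / Gm (- x)).

(* Actions: a i = true means a_{i+1} = +1, false means a_{i+1} = -1.
   ell Gp Gm a n = ell_{n+1} (public log-likelihood ratio after
   observing a_1, ..., a_n); in particular ell Gp Gm a 0 = ell_1 = 0. *)
Fixpoint ell (Gp Gm : R -> R) (a : nat -> bool) (n : nat) : R :=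
  match n with
  | O => 0
  | S k => let l := ell Gp Gm a k in
           if a k then l + Dplus Gp Gm l else l + Dminus Gp Gm l
  end.

(* P_+(a_t = b | a_1..a_{t-1}) when the public LLR is l:
   a_t = +1 iff l + L_t > 0, L_t ~ G_+ under theta = +1. *)
Definition step_prob (Gp : R -> R) (b : bool) (l : R) : R :=
  if b then 1 - Gp (- l) else Gp (- l).

Fixpoint path_prob (Gp Gm : R -> R) (a : nat -> bool) (n : nat) : R :=
  match n with
  | O => 1
  | S k => path_prob Gp Gm a k * step_prob Gp (a k) (ell Gp Gm a k)
  end.

Fixpoint all_seqs (n : nat) : list (list bool) :=
  match n with
  | O => nil :: nil
  | S k => flat_map (fun s => (true :: s) :: (false :: s) :: nil) (all_seqs k)
  end.

Definition seq_fun (s : list bool) : nat -> bool := fun i => nth i s false.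

Definition deviates (Gp Gm f : R -> R) (eps : R) (a : nat -> bool) (n : nat)
  : bool :=
  if Rlt_dec eps (Rabs (ell Gp Gm a n / f (INR (S n)) - 1)) then true
  else false.

Definition deviates_between (Gp Gm f : R -> R) (eps : R) (a : nat -> bool)
  (N M : nat) : bool :=
  existsb (deviates Gp Gm f eps a) (seq N (S M - N)).

(* P_+( exists n in [N, M], |ell_{n+1}/f(n+1) - 1| > eps ). *)
Definition prob_deviation (Gp Gm f : R -> R) (eps : R) (N M : nat) : R :=
  fold_right Rplus 0
    (map (fun s => let a := seq_fun s in
                   if deviates_between Gp Gm f eps a N M
                   then path_prob Gp Gm a M else 0)
         (all_seqs M)).

(* ell_t / f(t) -> 1 P_+-almost surely, expressed through the
   finite-dimensional laws: for every eps > 0,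
   P_+(sup_{t >= N} |ell_t/f(t) - 1| > eps) -> 0 as N -> infinity. *)
Definition ratio_tends_to_one_as (Gp Gm f : R -> R) : Prop :=
  forall eps, 0 < eps -> forall delta, 0 < delta ->
    exists N : nat, forall M : nat, (N <= M)%nat ->
      prob_deviation Gp Gm f eps N M < delta.

(* Under [theta = +1] the likelihood ratio [exp (- ell_t)] is a martingale and
   [exp (- ell_t / 2)] a nonnegative supermartingale whose expected decrease is
   bounded below on [|ell_t| <= L]; hence [P (|ell_N| <= L)] is small for some
   [N], while [P (ell_N <= - L) <= e^-L].  On [ell_N > L], optional stopping of
   [exp (- ell)] shows that, except with probability [e^-L], every later agent
   takes action [+1].  Along such a herd the belief follows the deterministic
   recursion [x |-> x + D_+ x] with [D_+ x ~ G_- (- x)], a discretization of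
   [f' = G_- (- f)].  Convexity of the left tail of [G_-] makes
   [x |-> x + k G_- (- x)] monotone and [G_- (- x)] nearly constant over unit
   steps, so the iterates are squeezed between [f ((1 - rho) t + a)] and
   [f ((1 + rho) t / (1 - rho) + b)]; as [f'] is nonincreasing, these are within
   a factor [1 +- O(rho)] of [f t]. *)

From Pilot Require Import Defs.
From Stdlib Require Import Reals Lra Lia Psatz List ClassicalEpsilon.
Open Scope R_scope.

Lemma exp_le_compat x y : x <= y -> exp x <= exp y.
Proof.
  intros [hlt | ->]; [left; apply exp_increasing |]; lra.
Qed.

Lemma ln_le_sub_1 x : 0 < x -> ln x <= x - 1.
Proof.
  intro hx. pose proof (exp_ineq1_le (ln x)) as h. rewrite exp_ln in h; lra.
Qed.

Lemma ln_le_of_le_exp r y : 0 < r -> r <= exp y -> ln r <= y.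
Proof.
  intros hr h. destruct (Rle_dec (ln r) y) as [hle | hlt]; auto. exfalso.
  pose proof (exp_increasing y (ln r) ltac:(lra)). rewrite exp_ln in H; lra.
Qed.

Lemma ln_div_pos x y : 0 < x -> 0 < y -> ln (x / y) = ln x - ln y.
Proof.
  intros hx hy. unfold Rdiv.
  rewrite ln_mult, ln_Rinv; [lra | lra | lra | apply Rinv_0_lt_compat; lra].
Qed.

Lemma exp_neg_add_ln x r : 0 < r -> exp (- (x + ln r)) = exp (- x) / r.
Proof.
  intro hr. replace (- (x + ln r)) with (- x + - ln r) by ring.
  rewrite exp_plus, (exp_Ropp (ln r)), exp_ln; auto.
Qed.

Lemma Rabs_div_sub_1_le y F e :
  0 < F -> (1 - e) * F <= y <= (1 + e) * F -> Rabs (y / F - 1) <= e.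
Proof.
  intros hF hy. replace (y / F - 1) with ((y - F) / F) by (field; lra).
  unfold Rdiv. rewrite Rabs_mult, Rabs_inv, (Rabs_pos_eq F) by lra.
  apply (Rmult_le_reg_r F); auto. rewrite Rmult_assoc, Rinv_l, Rmult_1_r by lra.
  apply Rabs_le. lra.
Qed.

Definition eventually (P : R -> Prop) : Prop := exists K, forall k, K <= k -> P k.

Lemma eventually_and (P Q : R -> Prop) :
  eventually P -> eventually Q -> eventually (fun k => P k /\ Q k).
Proof.
  intros [K1 h1] [K2 h2]. exists (Rmax K1 K2). intros k hk.
  pose proof (Rmax_l K1 K2). pose proof (Rmax_r K1 K2). split; [apply h1 | apply h2]; lra.
Qed.

Lemma eventually_linear a b : 0 < a -> eventually (fun k => b <= a * k).
Proof.
  intro ha. exists (b / a). intros k hk.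
  apply (Rmult_le_compat_l a) in hk; [| lra].
  replace (a * (b / a)) with b in hk by (field; lra). exact hk.
Qed.

Lemma exp_neg_half_ln_sq r : 0 < r -> exp (- ln r / 2) * exp (- ln r / 2) = / r.
Proof.
  intro hr. rewrite <- exp_plus. replace (- ln r / 2 + - ln r / 2) with (- ln r) by field.
  rewrite exp_Ropp, exp_ln; auto.
Qed.

(* [A + B] is the Bhattacharyya coefficient of two Bernoulli laws; each square
   root lies below its AM-GM bound by at least [(p - q) ^ 2 / 8]. *)
Lemma bhattacharyya_le p q A B : 0 < p < 1 -> 0 < q < 1 -> 0 <= A -> 0 <= B ->
  A * A = p * q -> B * B = (1 - p) * (1 - q) -> A + B <= 1 - (p - q) ^ 2 / 4.
Proof.
  intros hp hq hA hB eA eB.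
  pose proof (pow2_ge_0 (p - q)).
  assert (h1 : 0 <= (p - q) ^ 2 * (1 - (p + q) / 2)) by (apply Rmult_le_pos; lra).
  assert (h2 : 0 <= (p - q) ^ 2 * (1 - (2 - p - q) / 2)) by (apply Rmult_le_pos; lra).
  assert (h3 : 0 <= (p - q) ^ 4)
    by (replace ((p - q) ^ 4) with (((p - q) ^ 2) ^ 2) by ring; apply pow2_ge_0).
  assert ((p - q) ^ 2 <= 1) by nra.
  assert (A <= (p + q) / 2 - (p - q) ^ 2 / 8).
  { apply Rsqr_incr_0_var; unfold Rsqr; [rewrite eA |]; nra. }
  assert (B <= (2 - p - q) / 2 - (p - q) ^ 2 / 8).
  { apply Rsqr_incr_0_var; unfold Rsqr; [rewrite eB |]; nra. }
  lra.
Qed.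

Lemma small_term_of_descent (u Y : nat -> R) k d N :
  0 < k -> (forall n, Y (S n) <= Y n - k * u n) -> Y 0%nat <= 1 ->
  (forall n, 0 <= Y n) -> 1 < INR N * k * d ->
  exists n, (n < N)%nat /\ u n < d.
Proof.
  intros hk hY h0 hpos hN.
  assert (H : forall m, (exists n, (n < m)%nat /\ u n < d) \/ Y m <= 1 - INR m * k * d).
  { induction m as [| m [[n [h1 h2]] | IH]].
    - right. simpl. lra.
    - left. exists n. split; [lia | auto].
    - destruct (Rlt_dec (u m) d).
      + left. exists m. split; [lia | auto].
      + right. rewrite S_INR. pose proof (hY m). nra. }
  destruct (H N) as [h | h]; auto. pose proof (hpos N). lra.
Qed.

Definition sum_list {A} (l : list A) (F : A -> R) : R := fold_right Rplus 0 (map F l).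

Lemma sum_list_ext_in {A} (l : list A) F G :
  (forall x, In x l -> F x = G x) -> sum_list l F = sum_list l G.
Proof.
  unfold sum_list. induction l as [| x l IH]; intro H; simpl; auto.
  rewrite (H x (or_introl eq_refl)), IH; auto.
  intros y hy. apply H. right. exact hy.
Qed.

Lemma sum_list_le_in {A} (l : list A) F G :
  (forall x, In x l -> F x <= G x) -> sum_list l F <= sum_list l G.
Proof.
  unfold sum_list. induction l as [| x l IH]; intro H; simpl; [lra |].
  pose proof (H x (or_introl eq_refl)). pose proof (IH (fun y h => H y (or_intror h))). lra.
Qed.

Lemma sum_list_plus {A} (l : list A) F G :
  sum_list l (fun x => F x + G x) = sum_list l F + sum_list l G.
Proof. unfold sum_list. induction l; simpl; [lra |]. rewrite IHl. ring. Qed.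

Lemma sum_list_scal {A} (l : list A) c F :
  sum_list l (fun x => c * F x) = c * sum_list l F.
Proof. unfold sum_list. induction l; simpl; [lra |]. rewrite IHl. ring. Qed.

Lemma length_of_in_all_seqs n s : In s (all_seqs n) -> length s = n.
Proof.
  revert s; induction n as [| n IH]; intros s H; simpl in H.
  - destruct H as [<- | []]; reflexivity.
  - apply in_flat_map in H. destruct H as [x [hx hs]].
    simpl in hs. destruct hs as [<- | [<- | []]]; simpl; rewrite IH; auto.
Qed.

Lemma in_all_seqs n s : length s = n -> In s (all_seqs n).
Proof.
  revert s; induction n as [| n IH]; intros s H; simpl.
  - destruct s; [left; auto | discriminate].
  - destruct s as [| b s]; [discriminate |]. simpl in H.
    apply in_flat_map. exists s. split; [apply IH; lia |].
    destruct b; simpl; auto.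
Qed.

Lemma sum_all_seqs_cons n F : sum_list (all_seqs (S n)) F =
  sum_list (all_seqs n) (fun s => F (true :: s) + F (false :: s)).
Proof.
  unfold sum_list. simpl. induction (all_seqs n) as [| x l IH]; simpl; auto.
  rewrite IH. ring.
Qed.

Lemma sum_all_seqs_snoc n F : sum_list (all_seqs (S n)) F =
  sum_list (all_seqs n) (fun s => F (s ++ true :: nil) + F (s ++ false :: nil)).
Proof.
  revert F; induction n as [| n IH]; intro F.
  - unfold sum_list. simpl. ring.
  - rewrite sum_all_seqs_cons, IH, sum_all_seqs_cons.
    apply sum_list_ext_in. intros s _. simpl. ring.
Qed.

Lemma uniform_eventually_in {A} (l : list A) (Q : A -> nat -> Prop) :
  (forall x, In x l -> exists K, forall m, (K <= m)%nat -> Q x m) ->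
  exists K, forall x, In x l -> forall m, (K <= m)%nat -> Q x m.
Proof.
  induction l as [| x l IH]; intro H.
  - exists 0%nat. intros s [].
  - destruct (H x (or_introl eq_refl)) as [K1 h1].
    destruct IH as [K2 h2]; [intros; apply H; right; auto |].
    exists (Nat.max K1 K2). intros s [<- | hs] m hm; [apply h1 | apply h2]; auto; lia.
Qed.

Lemma existsb_ext_in {A} (p q : A -> bool) l :
  (forall x, In x l -> p x = q x) -> existsb p l = existsb q l.
Proof.
  induction l as [| x l IH]; intro H; simpl; auto.
  rewrite (H x (or_introl eq_refl)), IH; auto. intros y hy. apply H. right. exact hy.
Qed.

Definition indicator (P : Prop) : R := if excluded_middle_informative P then 1 else 0.

Lemma indicator_le P x : 0 <= x -> (P -> 1 <= x) -> indicator P <= x.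
Proof. unfold indicator. destruct excluded_middle_informative; auto. Qed.

Lemma indicator_le_or P Q1 Q2 : (P -> Q1 \/ Q2) -> indicator P <= indicator Q1 + indicator Q2.
Proof.
  intro H. unfold indicator.
  destruct (excluded_middle_informative P), (excluded_middle_informative Q1),
    (excluded_middle_informative Q2); try lra; tauto.
Qed.

(** * The signal distribution *)

Lemma cdf_nonneg_of_mixture G H : is_cdf G -> is_cdf H ->
  (forall M, exists x, x < - M /\ 0 < (G x + H x) / 2) -> forall y, 0 <= H y.
Proof.
  intros [_ [G_left _]] [H_mono _] mix y.
  destruct (Rle_dec 0 (H y)) as [h | h]; auto. exfalso.
  destruct (G_left (- H y) ltac:(lra)) as [M HM].
  destruct (mix (- Rmin y M)) as [x [hx hpos]].
  pose proof (Rmin_l y M). pose proof (Rmin_r y M).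
  pose proof (H_mono x y ltac:(lra)). pose proof (HM x ltac:(lra)). lra.
Qed.

Lemma cdf_le_1_of_mixture G H : is_cdf G -> is_cdf H ->
  (forall M, 0 < 1 - (G M + H M) / 2) -> forall y, H y <= 1.
Proof.
  intros [_ [_ G_right]] [H_mono _] mix y.
  destruct (Rle_dec (H y) 1) as [h | h]; auto. exfalso.
  destruct (G_right (H y - 1) ltac:(lra)) as [M HM].
  pose proof (Rmax_l y M). pose proof (Rmax_r y M).
  pose proof (H_mono y (Rmax y M) ltac:(lra)). pose proof (HM (Rmax y M) ltac:(lra)).
  pose proof (mix (Rmax y M)). lra.
Qed.

(* [Gp_le_exp_Gm] and [exp_Gm_tail_le] integrate [dG_+ = e^x dG_-] over
   [(-oo, y]] and [(y, +oo)]. *)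
Record signal_law (Gp Gm : R -> R) : Prop := {
  Gm_mono : forall x y, x <= y -> Gm x <= Gm y;
  Gm_left_tail : forall e, 0 < e -> exists M, forall x, x <= M -> Gm x < e;
  Gp_range : forall y, 0 < Gp y < 1;
  Gm_range : forall y, 0 < Gm y < 1;
  Gp_le_exp_Gm : forall y, Gp y <= exp y * Gm y;
  exp_Gm_tail_le : forall y, exp y * (1 - Gm y) <= 1 - Gp y;
  law_llr : llr_pair Gp Gm }.

Section SignalLaw.

Variables Gp Gm : R -> R.
Hypotheses (cdf_p : is_cdf Gp) (cdf_m : is_cdf Gm) (llr : llr_pair Gp Gm).
Hypothesis unbounded : unbounded_signals Gp Gm.

Let mix_right M : 0 < 1 - (Gp M + Gm M) / 2.
Proof. apply unbounded. Qed.

Let mix_left M : exists x, x < - M /\ 0 < (Gp x + Gm x) / 2.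
Proof. apply unbounded. Qed.

Let Gm_nonneg : forall y, 0 <= Gm y.
Proof. exact (cdf_nonneg_of_mixture Gp Gm cdf_p cdf_m mix_left). Qed.

Let Gp_nonneg : forall y, 0 <= Gp y.
Proof.
  apply (cdf_nonneg_of_mixture Gm Gp cdf_m cdf_p).
  intro M. destruct (mix_left M) as [x hx]. exists x. lra.
Qed.

Let Gm_le_1 : forall y, Gm y <= 1.
Proof. exact (cdf_le_1_of_mixture Gp Gm cdf_p cdf_m mix_right). Qed.

Let Gp_le_1 : forall y, Gp y <= 1.
Proof.
  apply (cdf_le_1_of_mixture Gm Gp cdf_m cdf_p). intro M. pose proof (mix_right M). lra.
Qed.

Lemma cdf_Gp_le_exp_Gm y : Gp y <= exp y * Gm y.
Proof.
  destruct cdf_p as [_ [Gp_left _]].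
  apply Rle_plus_epsilon. intros e he.
  destruct (Gp_left e he) as [M HM].
  set (a := Rmin (y - 1) M). pose proof (Rmin_l (y - 1) M). pose proof (Rmin_r (y - 1) M).
  destruct (llr a y ltac:(unfold a; lra)) as [_ h].
  pose proof (HM a ltac:(unfold a; lra)). pose proof (Gm_nonneg a). pose proof (exp_pos y). nra.
Qed.

Lemma cdf_exp_Gm_tail_le y : exp y * (1 - Gm y) <= 1 - Gp y.
Proof.
  destruct cdf_m as [_ [_ Gm_right]].
  pose proof (exp_pos y). apply Rle_plus_epsilon. intros e he.
  destruct (Gm_right (e / exp y) ltac:(apply Rdiv_lt_0_compat; lra)) as [M HM].
  set (b := Rmax (y + 1) M). pose proof (Rmax_l (y + 1) M). pose proof (Rmax_r (y + 1) M).
  destruct (llr y b ltac:(unfold b; lra)) as [h _].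
  pose proof (HM b ltac:(unfold b; lra)). pose proof (Gp_le_1 b).
  assert (exp y * (e / exp y) = e) by (field; lra). nra.
Qed.

Lemma cdf_Gm_pos y : 0 < Gm y.
Proof.
  destruct cdf_m as [Gm_mon _].
  destruct (mix_left (- y)) as [x [hx hpos]].
  pose proof (cdf_Gp_le_exp_Gm x). pose proof (exp_pos x). pose proof (Gm_mon x y ltac:(lra)).
  nra.
Qed.

Lemma cdf_Gm_lt_1 y : Gm y < 1.
Proof.
  destruct cdf_m as [Gm_mon _]. destruct cdf_p as [_ [_ Gp_right]].
  destruct (Rlt_dec (Gm y) 1) as [h | h]; auto. exfalso.
  assert (Gm y = 1) by (pose proof (Gm_le_1 y); lra).
  enough (1 <= Gp y) by (pose proof (mix_right y); lra).
  apply Rle_plus_epsilon. intros e he. destruct (Gp_right e he) as [M HM].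
  set (b := Rmax (y + 1) M). pose proof (Rmax_l (y + 1) M). pose proof (Rmax_r (y + 1) M).
  destruct (llr y b ltac:(unfold b; lra)) as [_ h2]. pose proof (HM b ltac:(unfold b; lra)).
  pose proof (Gm_le_1 b). pose proof (exp_pos b). pose proof (Gm_mon y b ltac:(unfold b; lra)).
  nra.
Qed.

Lemma cdf_Gp_pos y : 0 < Gp y.
Proof.
  destruct cdf_m as [_ [Gm_left _]].
  destruct (Gm_left (Gm y / 2) ltac:(pose proof (cdf_Gm_pos y); lra)) as [M HM].
  set (a := Rmin (y - 1) M). pose proof (Rmin_l (y - 1) M). pose proof (Rmin_r (y - 1) M).
  destruct (llr a y ltac:(unfold a; lra)) as [h _]. pose proof (HM a ltac:(unfold a; lra)).
  pose proof (Gp_nonneg a). pose proof (exp_pos a). pose proof (cdf_Gm_pos y). nra.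
Qed.

Lemma cdf_Gp_lt_1 y : Gp y < 1.
Proof.
  pose proof (cdf_exp_Gm_tail_le y). pose proof (cdf_Gm_lt_1 y). pose proof (exp_pos y). nra.
Qed.

Lemma signal_law_of_cdfs : signal_law Gp Gm.
Proof.
  destruct cdf_m as [Gm_mon [Gm_left _]].
  constructor; auto using cdf_Gp_le_exp_Gm, cdf_exp_Gm_tail_le.
  - intro y. split; [apply cdf_Gp_pos | apply cdf_Gp_lt_1].
  - intro y. split; [apply cdf_Gm_pos | apply cdf_Gm_lt_1].
Qed.

End SignalLaw.

(** * Comparison of the recursion [x + delta x] with the ODE [f' = g (f)] *)

Section ODEComparison.

Variables (g f : R -> R) (T : R).
Hypothesis g_pos : forall x, 0 < g x.
Hypothesis g_noninc : forall x y, x <= y -> g y <= g x.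
Hypothesis f_pos : forall t, 0 < t -> 0 < f t.
Hypothesis f_ode : forall t, T < t -> derivable_pt_lim f t (g (f t)).

Lemma f_mvt a b : T < a -> a < b -> exists c, a < c < b /\ f b - f a = g (f c) * (b - a).
Proof.
  intros ha hab.
  destruct (MVT_cor2 f (fun x => g (f x)) a b hab) as [c [e hc]].
  - intros c hc. apply f_ode. lra.
  - exists c. auto.
Qed.

Lemma f_le_compat a b : T < a -> a <= b -> f a <= f b.
Proof.
  intros ha [hab | <-]; [| lra].
  destruct (f_mvt a b ha hab) as [c [_ e]]. pose proof (g_pos (f c)). nra.
Qed.

Lemma f_increment_le a d : T < a -> 0 <= d -> f (a + d) - f a <= d * g (f a).
Proof.
  intros ha [hd | <-]; [| rewrite Rplus_0_r; lra].
  destruct (f_mvt a (a + d) ha ltac:(lra)) as [c [hc e]].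
  rewrite e. pose proof (g_noninc _ _ (f_le_compat a c ha ltac:(lra))).
  replace (a + d - a) with d by ring. nra.
Qed.

Lemma f_unbounded a B : T < a -> exists t, a < t /\ B <= f t.
Proof.
  intro ha. pose proof (g_pos B) as hB.
  set (t := a + Rabs (B - f a) / g B + 1).
  assert (0 <= Rabs (B - f a) / g B)
    by (apply Rmult_le_pos; [apply Rabs_pos | left; apply Rinv_0_lt_compat; auto]).
  exists t. split; [unfold t; lra |].
  destruct (Rle_dec B (f t)) as [h | h]; auto. exfalso.
  destruct (f_mvt a t ha ltac:(unfold t; lra)) as [c [hc e]].
  pose proof (g_noninc (f c) B ltac:(pose proof (f_le_compat c t ltac:(lra) ltac:(lra)); lra)).
  assert (g B * (t - a) <= f t - f a) by (rewrite e; apply Rmult_le_compat_r; lra).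
  assert (g B * (t - a) = Rabs (B - f a) + g B) by (unfold t; field; lra).
  pose proof (Rle_abs (B - f a)). lra.
Qed.

(* Since [f' = g (f)] is nonincreasing, [f v >= (v - T1) g (f v)]: relative
   increments of [f] are controlled by relative increments of time. *)
Lemma f_ratio_le T1 u v e : T < T1 -> 0 < T1 -> T1 < u -> T1 < v -> 0 <= e ->
  u - v <= e * (v - T1) -> f u <= (1 + e) * f v.
Proof.
  intros hT1 hT1pos hu hv he huv. pose proof (f_pos T1 hT1pos).
  destruct (Rle_dec u v) as [h | h].
  { pose proof (f_le_compat u v ltac:(lra) h). pose proof (f_pos v ltac:(lra)). nra. }
  pose proof (f_increment_le v (u - v) ltac:(lra) ltac:(lra)) as hinc.
  replace (v + (u - v)) with u in hinc by ring.
  destruct (f_mvt T1 v hT1 hv) as [c [hc e']].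
  pose proof (g_noninc _ _ (f_le_compat c v ltac:(lra) ltac:(lra))).
  assert (g (f v) * (v - T1) <= f v) by nra.
  pose proof (g_pos (f v)). nra.
Qed.

Lemma f_rescaled_bounds e a0 b0 C : 0 < e <= 1 ->
  eventually (fun k =>
    (1 - e) * f (k + C) <= f (a0 + k * (1 - e / 6)) /\
    f (b0 + k * ((1 + e / 6) / (1 - e / 6))) <= (1 + e) * f (k + C)).
Proof.
  intro he.
  set (be := (1 + e / 6) / (1 - e / 6)). set (al := 1 - e / 6).
  assert (hbe : be * (1 - e / 6) = 1 + e / 6) by (unfold be; field; lra).
  set (T1 := Rmax T 0 + 1). pose proof (Rmax_l T 0). pose proof (Rmax_r T 0).
  destruct (eventually_and _ _ (eventually_linear al (T1 + 1 - a0) ltac:(unfold al; lra))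
           (eventually_and _ _ (eventually_linear 1 (T1 + 1 - C) ltac:(lra))
           (eventually_and _ _ (eventually_linear be (T1 + 1 - b0) ltac:(nra))
           (eventually_and _ _
              (eventually_linear (e * al + al - 1) (C - a0 + e * (T1 - a0)) ltac:(unfold al; nra))
              (eventually_linear (1 + e - be) (b0 - C - e * (C - T1)) ltac:(nra))))))
    as [K HK].
  exists (Rmax K 0). intros k hk. pose proof (Rmax_l K 0). pose proof (Rmax_r K 0).
  destruct (HK k ltac:(lra)) as [c1 [c2 [c3 [c4 c5]]]].
  split.
  - assert (ha : 0 < f (a0 + k * al)) by (apply f_pos; unfold T1 in *; nra).
    pose proof (f_ratio_le T1 (k + C) (a0 + k * al) e ltac:(unfold T1; lra) ltac:(unfold T1; lra)
                  ltac:(lra) ltac:(lra) ltac:(lra) ltac:(nra)).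
    nra.
  - apply (f_ratio_le T1); unfold T1 in *; nra.
Qed.

Variable x1 : R.
Hypothesis g_convex : forall x y l, x1 < x -> x1 < y -> 0 <= l <= 1 ->
  g (l * x + (1 - l) * y) <= l * g x + (1 - l) * g y.

Lemma g_chord y d : x1 + 1 < y -> 0 <= d -> g y - g (y + d) <= d * (g (y - 1) - g y).
Proof.
  intros hy hd.
  assert (hl : 0 <= 1 / (1 + d) <= 1).
  { split; [apply Rlt_le, Rdiv_lt_0_compat; lra |].
    apply (Rmult_le_reg_r (1 + d)); [lra |]. field_simplify; lra. }
  pose proof (g_convex (y + d) (y - 1) (1 / (1 + d)) ltac:(lra) ltac:(lra) hl) as h.
  replace (1 / (1 + d) * (y + d) + (1 - 1 / (1 + d)) * (y - 1)) with y in h by (field; lra).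
  apply (Rmult_le_compat_l (1 + d)) in h; [| lra].
  replace ((1 + d) * (1 / (1 + d) * g (y + d) + (1 - 1 / (1 + d)) * g (y - 1)))
    with (g (y + d) + d * g (y - 1)) in h by (field; lra).
  nra.
Qed.

Lemma shift_le_compat u v k : x1 + 1 < u -> g (u - 1) <= 1 / 2 -> u <= v -> 0 <= k <= 2 ->
  u + k * g u <= v + k * g v.
Proof.
  intros hu hg huv hk.
  pose proof (g_chord u (v - u) hu ltac:(lra)) as h.
  replace (u + (v - u)) with v in h by ring.
  pose proof (g_pos u). pose proof (g_noninc u v huv).
  assert (g u - g v <= (v - u) / 2) by nra.
  nra.
Qed.

Lemma g_increment_ge y d rho : x1 + 1 < y -> g (y - 1) <= rho / 2 -> 0 <= d <= 2 * g y ->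
  (1 - rho) * g y <= g (y + d).
Proof.
  intros hy hg hd.
  pose proof (g_chord y d hy ltac:(lra)). pose proof (g_pos y). pose proof (g_pos (y - 1)).
  nra.
Qed.

Variable delta : R -> R.
Hypothesis delta_equiv : forall rho, 0 < rho ->
  exists X, forall x, X <= x -> (1 - rho) * g x <= delta x <= (1 + rho) * g x.
Hypothesis g_vanishes : forall e, 0 < e -> exists M, forall x, M <= x -> g x < e.

Definition step x := x + delta x.

Definition tail_controlled rho X := forall x, X <= x ->
  (1 - rho) * g x <= delta x <= (1 + rho) * g x /\ g (x - 1) <= rho / 2 /\ x1 + 1 < x.

Lemma tail_controlled_exists rho : 0 < rho -> exists X, tail_controlled rho X.
Proof.
  intro hr. destruct (delta_equiv rho hr) as [X1 h1].
  destruct (g_vanishes (rho / 2) ltac:(lra)) as [M hM].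
  exists (Rmax X1 (Rmax (M + 1) (x1 + 2))). intros x hx.
  pose proof (Rmax_l X1 (Rmax (M + 1) (x1 + 2))). pose proof (Rmax_r X1 (Rmax (M + 1) (x1 + 2))).
  pose proof (Rmax_l (M + 1) (x1 + 2)). pose proof (Rmax_r (M + 1) (x1 + 2)).
  split; [apply h1; lra |]. split; [left; apply hM; lra | lra].
Qed.

Section OneStep.

Variables rho X : R.
Hypothesis hrho : 0 < rho <= 1 / 6.
Hypothesis hX : tail_controlled rho X.

Lemma step_lower a x : T < a -> X <= f a -> f a <= x -> f (a + (1 - rho)) <= step x.
Proof.
  intros ha hfa hx.
  destruct (hX (f a) hfa) as [_ [hg hx1]].
  destruct (hX x ltac:(lra)) as [[hd _] _].
  pose proof (shift_le_compat (f a) x (1 - rho) hx1 ltac:(lra) hx ltac:(lra)).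
  pose proof (f_increment_le a (1 - rho) ha ltac:(lra)).
  unfold step. lra.
Qed.

(* Over the time [(1 + rho) / (1 - rho)], [f] moves by at most [2 g (f b)], so
   [g] loses at most a factor [1 - rho] and [f] gains at least [(1 + rho) g (f b)]. *)
Lemma step_upper b x : T < b -> X <= x -> x <= f b ->
  step x <= f (b + (1 + rho) / (1 - rho)).
Proof.
  intros hb hx hxb.
  destruct (hX x hx) as [[_ hd] [hg hx1]].
  destruct (hX (f b) ltac:(lra)) as [_ [hgb hb1]].
  pose proof (shift_le_compat x (f b) (1 + rho) hx1 ltac:(lra) hxb ltac:(lra)).
  set (be := (1 + rho) / (1 - rho)).
  assert (hbe : be * (1 - rho) = 1 + rho) by (unfold be; field; lra).
  assert (hbe2 : 1 <= be <= 2) by nra.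
  destruct (f_mvt b (b + be) hb ltac:(lra)) as [c [hc e]].
  replace (b + be - b) with be in e by ring.
  pose proof (f_increment_le b (c - b) hb ltac:(lra)) as hinc.
  replace (b + (c - b)) with c in hinc by ring.
  pose proof (f_le_compat b c hb ltac:(lra)). pose proof (g_pos (f b)).
  pose proof (g_increment_ge (f b) (f c - f b) rho hb1 hgb ltac:(nra)) as hslow.
  replace (f b + (f c - f b)) with (f c) in hslow by ring.
  unfold step. nra.
Qed.

Lemma iter_step_sandwich a0 b0 x0 : T < a0 -> T < b0 -> X <= f a0 -> f a0 <= x0 <= f b0 ->
  forall k : nat, f (a0 + INR k * (1 - rho)) <= Nat.iter k step x0 <=
                  f (b0 + INR k * ((1 + rho) / (1 - rho))).
Proof.
  intros ha0 hb0 hXa hx0. assert (hbe : 1 <= (1 + rho) / (1 - rho)).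
  { apply (Rmult_le_reg_r (1 - rho)); [lra |]. field_simplify; lra. }
  induction k as [| k [IHl IHu]].
  - simpl. rewrite !Rmult_0_l, !Rplus_0_r. lra.
  - rewrite S_INR. simpl Nat.iter. pose proof (pos_INR k).
    pose proof (f_le_compat a0 (a0 + INR k * (1 - rho)) ha0 ltac:(nra)).
    split.
    + replace (a0 + (INR k + 1) * (1 - rho)) with (a0 + INR k * (1 - rho) + (1 - rho)) by ring.
      apply step_lower; [nra | lra | lra].
    + replace (b0 + (INR k + 1) * ((1 + rho) / (1 - rho)))
        with (b0 + INR k * ((1 + rho) / (1 - rho)) + (1 + rho) / (1 - rho)) by ring.
      apply step_upper; [nra | lra | lra].
Qed.

End OneStep.

Theorem iter_step_ratio_tends_to_one x0 :
  (forall B, exists n, B <= Nat.iter n step x0) ->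
  forall eps c, 0 < eps ->
  exists K : nat, forall m, (K <= m)%nat -> Rabs (Nat.iter m step x0 / f (INR m + c) - 1) <= eps.
Proof.
  intros unb eps c heps.
  pose proof (Rmin_l eps 1). pose proof (Rmin_r eps 1).
  assert (he : 0 < Rmin eps 1) by (apply Rmin_case; lra).
  set (e := Rmin eps 1) in *.
  destruct (tail_controlled_exists (e / 6) ltac:(lra)) as [X hX].
  destruct (f_unbounded (T + 1) X ltac:(lra)) as [a0 [ha0 hXa0]].
  destruct (unb (f a0)) as [n1 hn1].
  destruct (f_unbounded (T + 1) (Nat.iter n1 step x0) ltac:(lra)) as [b0 [hb0 hb0']].
  pose proof (iter_step_sandwich (e / 6) X ltac:(lra) hX a0 b0 (Nat.iter n1 step x0)
                ltac:(lra) ltac:(lra) hXa0 (conj hn1 hb0')) as sandwich.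
  destruct (f_rescaled_bounds e a0 b0 (INR n1 + c) ltac:(lra)) as [K HK].
  destruct (INR_unbounded (Rmax K (1 - c))) as [K' hK'].
  pose proof (Rmax_l K (1 - c)). pose proof (Rmax_r K (1 - c)).
  exists (n1 + K')%nat. intros m hm.
  set (k := (m - n1)%nat). replace m with (k + n1)%nat by (unfold k; lia).
  rewrite Nat.iter_add, plus_INR, Rplus_assoc.
  assert (hk : Rmax K (1 - c) <= INR k) by (pose proof (le_INR K' k ltac:(unfold k; lia)); lra).
  destruct (HK (INR k) ltac:(lra)) as [hlo hup]. destruct (sandwich k) as [slo sup].
  apply Rle_trans with e; [| lra].
  apply Rabs_div_sub_1_le; [apply f_pos; pose proof (pos_INR n1) |]; lra.
Qed.

End ODEComparison.

(** * The belief process under [theta = +1] *)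

Section Model.

Variables Gp Gm : R -> R.
Hypothesis law : signal_law Gp Gm.

Let Gp_bounds := Gp_range Gp Gm law.
Let Gm_bounds := Gm_range Gp Gm law.

Definition gap y := Gm y - Gp y.

Lemma gap_le_nonpos a b : a <= b <= 0 -> gap a <= gap b.
Proof.
  intros hab. unfold gap. destruct (Req_dec a b) as [-> | n]; [lra |].
  destruct (law_llr _ _ law a b ltac:(lra)) as [_ h].
  pose proof (exp_le_compat b 0 ltac:(lra)). rewrite exp_0 in H.
  pose proof (Gm_mono _ _ law a b ltac:(lra)). pose proof (exp_pos b). nra.
Qed.

Lemma gap_ge_nonneg a b : 0 <= a <= b -> gap b <= gap a.
Proof.
  intros hab. unfold gap. destruct (Req_dec a b) as [-> | n]; [lra |].
  destruct (law_llr _ _ law a b ltac:(lra)) as [h _].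
  pose proof (exp_le_compat 0 a ltac:(lra)). rewrite exp_0 in H.
  pose proof (Gm_mono _ _ law a b ltac:(lra)). nra.
Qed.

Lemma gap_pos y : 0 < gap y.
Proof.
  assert (neg : forall y, y < 0 -> 0 < gap y).
  { intros z hz. unfold gap. pose proof (Gp_le_exp_Gm _ _ law z). pose proof (Gm_bounds z).
    pose proof (exp_increasing z 0 hz). rewrite exp_0 in H1. nra. }
  destruct (Rtotal_order y 0) as [h | [-> | h]]; auto.
  - pose proof (gap_le_nonpos (-1) 0 ltac:(lra)). pose proof (neg (-1) ltac:(lra)). lra.
  - unfold gap. pose proof (exp_Gm_tail_le _ _ law y). pose proof (Gm_bounds y).
    pose proof (exp_increasing 0 y h). rewrite exp_0 in H1. nra.
Qed.

Lemma gap_ge_min lo hi y : lo <= y <= hi -> Rmin (gap lo) (gap hi) <= gap y.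
Proof.
  intro h. pose proof (Rmin_l (gap lo) (gap hi)). pose proof (Rmin_r (gap lo) (gap hi)).
  destruct (Rle_dec y 0).
  - pose proof (gap_le_nonpos lo y ltac:(lra)). lra.
  - pose proof (gap_ge_nonneg y hi ltac:(lra)). lra.
Qed.

Definition update (b : bool) (l : R) : R :=
  if b then l + Defs.Dplus Gp Gm l else l + Defs.Dminus Gp Gm l.

Lemma ell_ext a a' n : (forall i, (i < n)%nat -> a i = a' i) ->
  ell Gp Gm a n = ell Gp Gm a' n.
Proof.
  induction n as [| n IH]; intro H; simpl; auto.
  rewrite IH, (H n) by (intros; try apply H; lia). reflexivity.
Qed.

Lemma path_prob_ext a a' n : (forall i, (i < n)%nat -> a i = a' i) ->
  path_prob Gp Gm a n = path_prob Gp Gm a' n.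
Proof.
  induction n as [| n IH]; intro H; simpl; auto.
  rewrite IH, (H n), (ell_ext a a' n) by (intros; try apply H; lia). reflexivity.
Qed.

Definition hist_ell s := ell Gp Gm (seq_fun s) (length s).
Definition hist_prob s := path_prob Gp Gm (seq_fun s) (length s).

Lemma seq_fun_snoc_lt s b i : (i < length s)%nat -> seq_fun (s ++ b :: nil) i = seq_fun s i.
Proof. intro h. apply app_nth1; auto. Qed.

Lemma seq_fun_snoc_last s b : seq_fun (s ++ b :: nil) (length s) = b.
Proof. apply nth_middle. Qed.

Lemma ell_snoc_prefix s b k : (k <= length s)%nat ->
  ell Gp Gm (seq_fun (s ++ b :: nil)) k = ell Gp Gm (seq_fun s) k.
Proof. intro h. apply ell_ext. intros i hi. apply seq_fun_snoc_lt. lia. Qed.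

Lemma hist_ell_snoc s b : hist_ell (s ++ b :: nil) = update b (hist_ell s).
Proof.
  unfold hist_ell. rewrite length_app, Nat.add_1_r. simpl.
  rewrite ell_snoc_prefix, seq_fun_snoc_last by lia. reflexivity.
Qed.

Lemma hist_prob_snoc s b :
  hist_prob (s ++ b :: nil) = hist_prob s * step_prob Gp b (hist_ell s).
Proof.
  unfold hist_prob, hist_ell. rewrite length_app, Nat.add_1_r. simpl.
  rewrite ell_snoc_prefix, seq_fun_snoc_last by lia.
  rewrite (path_prob_ext (seq_fun (s ++ b :: nil)) (seq_fun s))
    by (intros; apply seq_fun_snoc_lt; lia).
  reflexivity.
Qed.

Lemma step_prob_pos b x : 0 < step_prob Gp b x.
Proof. pose proof (Gp_bounds (- x)). unfold step_prob. destruct b; lra. Qed.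

Lemma hist_prob_nonneg s : 0 <= hist_prob s.
Proof.
  unfold hist_prob. induction (length s); simpl; [lra |].
  pose proof (step_prob_pos (seq_fun s n) (ell Gp Gm (seq_fun s) n)). nra.
Qed.

Definition Ex n (F : list bool -> R) : R := sum_list (all_seqs n) (fun s => hist_prob s * F s).

Lemma Ex_ext n F G : (forall s, length s = n -> F s = G s) -> Ex n F = Ex n G.
Proof.
  intro H. apply sum_list_ext_in. intros s hs.
  rewrite (H s (length_of_in_all_seqs n s hs)). reflexivity.
Qed.

Lemma Ex_le n F G : (forall s, length s = n -> F s <= G s) -> Ex n F <= Ex n G.
Proof.
  intro H. apply sum_list_le_in. intros s hs.
  apply Rmult_le_compat_l; [apply hist_prob_nonneg | apply H, (length_of_in_all_seqs n s hs)].
Qed.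

Lemma Ex_plus n F G : Ex n (fun s => F s + G s) = Ex n F + Ex n G.
Proof.
  unfold Ex. rewrite <- sum_list_plus. apply sum_list_ext_in. intros; ring.
Qed.

Lemma Ex_scal n c F : Ex n (fun s => c * F s) = c * Ex n F.
Proof.
  unfold Ex. rewrite <- sum_list_scal. apply sum_list_ext_in. intros; ring.
Qed.

Lemma Ex_nonneg n F : (forall s, 0 <= F s) -> 0 <= Ex n F.
Proof.
  intro H. apply Rle_trans with (Ex n (fun s => 0 * F s)).
  - rewrite Ex_scal. lra.
  - apply Ex_le. intros s _. rewrite Rmult_0_l. apply H.
Qed.

Lemma Ex_O F : Ex 0 F = F nil.
Proof. unfold Ex, sum_list, hist_prob. simpl. ring. Qed.

Lemma Ex_S n F : Ex (S n) F = Ex n (fun s =>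
  step_prob Gp true (hist_ell s) * F (s ++ true :: nil) +
  step_prob Gp false (hist_ell s) * F (s ++ false :: nil)).
Proof.
  unfold Ex. rewrite sum_all_seqs_snoc. apply sum_list_ext_in. intros s _.
  rewrite !hist_prob_snoc. ring.
Qed.

Lemma Ex_const n c : Ex n (fun _ => c) = c.
Proof.
  induction n as [| n IH]; [apply Ex_O |].
  rewrite Ex_S. transitivity (Ex n (fun _ => c)); [| exact IH].
  apply Ex_ext. intros s _. unfold step_prob. simpl. ring.
Qed.

Lemma Ex_prefix k M (H : R -> R) : (k <= M)%nat ->
  Ex M (fun s => H (ell Gp Gm (seq_fun s) k)) = Ex k (fun s => H (hist_ell s)).
Proof.
  intro hk. induction M as [| M IH].
  - replace k with 0%nat by lia. apply Ex_ext. intros s hs. unfold hist_ell. rewrite hs. auto.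
  - destruct (Nat.eq_dec k (S M)) as [-> | hne].
    + apply Ex_ext. intros s hs. unfold hist_ell. rewrite hs. reflexivity.
    + rewrite Ex_S, <- IH by lia. apply Ex_ext. intros s hs.
      rewrite !ell_snoc_prefix by lia. unfold step_prob. simpl. ring.
Qed.

Definition prob n (A : list bool -> Prop) : R := Ex n (fun s => indicator (A s)).

Lemma prob_union n (A B C : list bool -> Prop) :
  (forall s, length s = n -> A s -> B s \/ C s) -> prob n A <= prob n B + prob n C.
Proof.
  intro H. unfold prob. rewrite <- Ex_plus. apply Ex_le. intros s hs.
  apply indicator_le_or, H, hs.
Qed.

Lemma prob_deviation_eq f eps N M : prob_deviation Gp Gm f eps N M =
  prob M (fun s => deviates_between Gp Gm f eps (seq_fun s) N M = true).
Proof.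
  apply sum_list_ext_in. intros s hs. unfold hist_prob, indicator.
  rewrite (length_of_in_all_seqs M s hs).
  destruct (deviates_between Gp Gm f eps (seq_fun s) N M),
    (excluded_middle_informative _); try discriminate; try tauto; ring.
Qed.

(** * Martingale estimates *)

Lemma update_exp_mean x :
  step_prob Gp true x * exp (- update true x) +
  step_prob Gp false x * exp (- update false x) = exp (- x).
Proof.
  unfold step_prob, update, Defs.Dplus, Defs.Dminus.
  pose proof (Gp_bounds (- x)). pose proof (Gm_bounds (- x)).
  rewrite !exp_neg_add_ln by (apply Rdiv_lt_0_compat; lra).
  field. lra.
Qed.

Lemma update_false_nonpos x : update false x <= 0.
Proof.
  unfold update, Defs.Dminus.
  pose proof (Gp_bounds (- x)). pose proof (Gm_bounds (- x)).
  pose proof (Gp_le_exp_Gm _ _ law (- x)).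
  enough (ln (Gp (- x) / Gm (- x)) <= - x) by lra.
  apply ln_le_of_le_exp; [apply Rdiv_lt_0_compat; lra |].
  apply (Rmult_le_reg_r (Gm (- x))); [lra |].
  field_simplify; lra.
Qed.

Lemma Ex_exp_neg_ell n : Ex n (fun s => exp (- hist_ell s)) = 1.
Proof.
  induction n as [| n IH].
  - rewrite Ex_O. unfold hist_ell. simpl. rewrite Ropp_0. apply exp_0.
  - rewrite Ex_S. transitivity (Ex n (fun s => exp (- hist_ell s))); [| exact IH].
    apply Ex_ext. intros s _. rewrite !hist_ell_snoc. apply update_exp_mean.
Qed.

Lemma prob_ell_le_neg n L : prob n (fun s => hist_ell s <= - L) <= exp (- L).
Proof.
  apply Rle_trans with (Ex n (fun s => exp (- L) * exp (- hist_ell s))).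
  - apply Ex_le. intros s _.
    apply indicator_le; [left; apply Rmult_lt_0_compat; apply exp_pos |].
    intro h. rewrite <- exp_plus, <- exp_0. apply exp_le_compat. lra.
  - rewrite Ex_scal, Ex_exp_neg_ell. lra.
Qed.

(* The mean is [exp (- x / 2)] times the Bhattacharyya coefficient of the laws
   of the action under the two states. *)
Lemma update_exp_half_mean x :
  step_prob Gp true x * exp (- update true x / 2) +
  step_prob Gp false x * exp (- update false x / 2)
  <= exp (- x / 2) * (1 - gap (- x) ^ 2 / 4).
Proof.
  unfold step_prob, update, Defs.Dplus, Defs.Dminus, gap.
  pose proof (Gp_bounds (- x)). pose proof (Gm_bounds (- x)).
  set (p := 1 - Gp (- x)). set (q := 1 - Gm (- x)).
  assert (split_exp : forall r, exp (- (x + ln r) / 2) = exp (- x / 2) * exp (- ln r / 2)).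
  { intro r. rewrite <- exp_plus. f_equal. field. }
  rewrite !split_exp.
  assert (hr1 : 0 < p / q) by (apply Rdiv_lt_0_compat; unfold p, q; lra).
  assert (hr2 : 0 < Gp (- x) / Gm (- x)) by (apply Rdiv_lt_0_compat; lra).
  pose proof (exp_neg_half_ln_sq _ hr1) as hw1. pose proof (exp_neg_half_ln_sq _ hr2) as hw2.
  set (w1 := exp (- ln (p / q) / 2)) in *. set (w2 := exp (- ln (Gp (- x) / Gm (- x)) / 2)) in *.
  assert (0 < w1) by apply exp_pos. assert (0 < w2) by apply exp_pos.
  pose proof (exp_pos (- x / 2)).
  assert (e1 : p * w1 * (p * w1) = p * q).
  { replace (p * w1 * (p * w1)) with (p * p * (w1 * w1)) by ring. rewrite hw1.
    field. split; unfold p, q; lra. }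
  assert (e2 : Gp (- x) * w2 * (Gp (- x) * w2) = (1 - p) * (1 - q)).
  { replace (Gp (- x) * w2 * (Gp (- x) * w2)) with (Gp (- x) * Gp (- x) * (w2 * w2)) by ring.
    rewrite hw2. unfold p, q. field. lra. }
  pose proof (bhattacharyya_le p q (p * w1) (Gp (- x) * w2) ltac:(unfold p; lra)
                ltac:(unfold q; lra) ltac:(unfold p; nra) ltac:(nra) e1 e2) as hb.
  replace (p - q) with (Gm (- x) - Gp (- x)) in hb by (unfold p, q; ring).
  nra.
Qed.

Lemma Ex_exp_half_decrease n L :
  Ex (S n) (fun s => exp (- hist_ell s / 2)) <=
  Ex n (fun s => exp (- hist_ell s / 2)) -
  exp (- L / 2) * Rmin (gap (- L)) (gap L) ^ 2 / 4 * prob n (fun s => - L < hist_ell s <= L).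
Proof.
  set (g := Rmin (gap (- L)) (gap L)).
  assert (hg : 0 < g) by (unfold g; apply Rmin_case; apply gap_pos).
  set (k := exp (- L / 2) * g ^ 2 / 4).
  apply Rle_trans with
    (Ex n (fun s => exp (- hist_ell s / 2) + - k * indicator (- L < hist_ell s <= L))).
  2: { unfold prob. rewrite Ex_plus, Ex_scal. lra. }
  rewrite Ex_S. apply Ex_le. intros s _. rewrite !hist_ell_snoc.
  set (v := hist_ell s). pose proof (update_exp_half_mean v).
  enough (k * indicator (- L < v <= L) <= exp (- v / 2) * (gap (- v) ^ 2 / 4)) by lra.
  pose proof (exp_pos (- v / 2)). pose proof (pow2_ge_0 (gap (- v))).
  unfold indicator. destruct (excluded_middle_informative (- L < v <= L)) as [hv | hv]; [| nra].
  pose proof (gap_ge_min (- L) L (- v) ltac:(lra)) as hgv. fold g in hgv.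
  pose proof (exp_le_compat (- L / 2) (- v / 2) ltac:(lra)). pose proof (exp_pos (- L / 2)).
  assert (g ^ 2 <= gap (- v) ^ 2) by nra.
  unfold k. nra.
Qed.

Lemma learning L d : 0 < d -> exists N, prob N (fun s => - L < hist_ell s <= L) < d.
Proof.
  intro hd.
  set (g := Rmin (gap (- L)) (gap L)).
  assert (hg : 0 < g) by (unfold g; apply Rmin_case; apply gap_pos).
  set (k := exp (- L / 2) * g ^ 2 / 4).
  assert (hk : 0 < k)
    by (unfold k; pose proof (exp_pos (- L / 2)); pose proof (pow_lt g 2 hg); nra).
  destruct (INR_archimed (k * d) 1 ltac:(nra)) as [N hN].
  destruct (small_term_of_descent (fun n => prob n (fun s => - L < hist_ell s <= L))
              (fun n => Ex n (fun s => exp (- hist_ell s / 2))) k d N hk) as [n [_ hn]].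
  - intro n. apply Ex_exp_half_decrease.
  - rewrite Ex_O. unfold hist_ell. simpl. replace (- 0 / 2) with 0 by field. rewrite exp_0. lra.
  - intro n. apply Ex_nonneg. intro s. left. apply exp_pos.
  - lra.
  - exists n. exact hn.
Qed.

Definition has_minus_from N0 s : bool :=
  existsb (fun i => negb (seq_fun s i)) (seq N0 (length s - N0)).

Lemma has_minus_from_snoc N0 s b : (N0 <= length s)%nat ->
  has_minus_from N0 (s ++ b :: nil) = orb (has_minus_from N0 s) (negb b).
Proof.
  intro h. unfold has_minus_from. rewrite length_app. simpl.
  replace (length s + 1 - N0)%nat with (S (length s - N0)) by lia.
  rewrite seq_S, existsb_app. simpl.
  replace (N0 + (length s - N0))%nat with (length s) by lia.
  rewrite seq_fun_snoc_last, Bool.orb_false_r. f_equal.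
  apply existsb_ext_in. intros i hi. apply in_seq in hi. rewrite seq_fun_snoc_lt by lia. auto.
Qed.

Lemma has_minus_from_self N0 s : length s = N0 -> has_minus_from N0 s = false.
Proof. intro h. unfold has_minus_from. rewrite h, Nat.sub_diag. reflexivity. Qed.

Lemma has_minus_from_false N0 s i : has_minus_from N0 s = false ->
  (N0 <= i < length s)%nat -> seq_fun s i = true.
Proof.
  intros h hi. destruct (seq_fun s i) eqn:e; auto.
  rewrite <- h. unfold has_minus_from. apply existsb_exists.
  exists i. split; [apply in_seq; lia | rewrite e; auto].
Qed.

(* The likelihood ratio [exp (- ell)] from time [N0] on, on the event
   [L < ell_N0], stopped and replaced by [1] at the first [-1] action: since a
   [-1] action always makes the belief nonpositive, this is a supermartingale. *)
Definition stopped_lr N0 L s : R :=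
  if Rlt_dec L (ell Gp Gm (seq_fun s) N0) then
    (if has_minus_from N0 s then 1 else exp (- hist_ell s)) else 0.

Lemma stopped_lr_nonneg N0 L s : 0 <= stopped_lr N0 L s.
Proof.
  unfold stopped_lr. pose proof (exp_pos (- hist_ell s)).
  destruct Rlt_dec; [destruct has_minus_from |]; lra.
Qed.

Lemma stopped_lr_supermartingale N0 L s : (N0 <= length s)%nat ->
  step_prob Gp true (hist_ell s) * stopped_lr N0 L (s ++ true :: nil) +
  step_prob Gp false (hist_ell s) * stopped_lr N0 L (s ++ false :: nil) <= stopped_lr N0 L s.
Proof.
  intro h. unfold stopped_lr.
  rewrite !ell_snoc_prefix, !has_minus_from_snoc, !hist_ell_snoc by lia. simpl.
  rewrite Bool.orb_false_r, Bool.orb_true_r.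
  pose proof (Gp_bounds (- hist_ell s)).
  destruct (Rlt_dec L (ell Gp Gm (seq_fun s) N0)); [| unfold step_prob; lra].
  destruct (has_minus_from N0 s); unfold step_prob in *; [lra |].
  pose proof (update_exp_mean (hist_ell s)) as hmean. unfold step_prob in hmean.
  assert (hdown : 1 <= exp (- update false (hist_ell s))).
  { rewrite <- exp_0. apply exp_le_compat. pose proof (update_false_nonpos (hist_ell s)). lra. }
  unfold update in *. nra.
Qed.

Lemma Ex_stopped_lr_le N0 L M : (N0 <= M)%nat -> Ex M (stopped_lr N0 L) <= exp (- L).
Proof.
  intro hM. induction hM as [| M hM IH].
  - rewrite <- (Ex_const N0 (exp (- L))). apply Ex_le. intros s hs.
    unfold stopped_lr. rewrite has_minus_from_self by auto.
    replace (ell Gp Gm (seq_fun s) N0) with (hist_ell s) by (unfold hist_ell; rewrite hs; auto).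
    destruct Rlt_dec; [apply exp_le_compat; lra | left; apply exp_pos].
  - apply Rle_trans with (Ex M (stopped_lr N0 L)); auto.
    rewrite Ex_S. apply Ex_le. intros s hs. apply stopped_lr_supermartingale. lia.
Qed.

Lemma prob_herd_broken N0 L M : (N0 <= M)%nat ->
  prob M (fun s => L < ell Gp Gm (seq_fun s) N0 /\ has_minus_from N0 s = true) <= exp (- L).
Proof.
  intro hM. eapply Rle_trans; [| apply (Ex_stopped_lr_le N0 L M hM)].
  apply Ex_le. intros s _. apply indicator_le; [apply stopped_lr_nonneg |].
  intros [hL hminus]. unfold stopped_lr. rewrite hminus.
  destruct Rlt_dec; [lra | contradiction].
Qed.

(** * Herding *)

Lemma Dplus_ge_gap x : gap (- x) <= Defs.Dplus Gp Gm x.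
Proof.
  unfold Defs.Dplus, gap.
  pose proof (Gp_bounds (- x)). pose proof (Gm_bounds (- x)). pose proof (gap_pos (- x)).
  unfold gap in H1.
  set (p := 1 - Gp (- x)) in *. set (q := 1 - Gm (- x)) in *.
  assert (0 < p) by (unfold p; lra). assert (0 < q) by (unfold q; lra).
  replace (ln (p / q)) with (- ln (q / p)) by (rewrite !ln_div_pos; auto; ring).
  pose proof (ln_le_sub_1 (q / p) ltac:(apply Rdiv_lt_0_compat; auto)).
  assert (q / p - 1 <= q - p).
  { apply (Rmult_le_reg_r p); auto.
    replace ((q / p - 1) * p) with (q - p) by (field; lra).
    assert (p <= 1) by (unfold p; lra). assert (0 < p - q) by (unfold p, q; lra). nra. }
  unfold p, q in *. lra.
Qed.

Lemma Dplus_pos x : 0 < Defs.Dplus Gp Gm x.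
Proof. pose proof (Dplus_ge_gap x). pose proof (gap_pos (- x)). lra. Qed.

Lemma Dplus_ge x : (1 - exp (- x)) * Gm (- x) <= Defs.Dplus Gp Gm x.
Proof.
  pose proof (Dplus_ge_gap x). pose proof (Gp_le_exp_Gm _ _ law (- x)). unfold gap in *. lra.
Qed.

Lemma Dplus_le x : Defs.Dplus Gp Gm x <= Gm (- x) / (1 - Gm (- x)).
Proof.
  unfold Defs.Dplus. pose proof (Gp_bounds (- x)). pose proof (Gm_bounds (- x)).
  pose proof (ln_le_sub_1 ((1 - Gp (- x)) / (1 - Gm (- x))) ltac:(apply Rdiv_lt_0_compat; lra)).
  enough ((1 - Gp (- x)) / (1 - Gm (- x)) - 1 <= Gm (- x) / (1 - Gm (- x))) by lra.
  apply (Rmult_le_reg_r (1 - Gm (- x))); [lra |].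
  field_simplify; lra.
Qed.

Lemma Dplus_equiv rho : 0 < rho -> exists X, forall x, X <= x ->
  (1 - rho) * Gm (- x) <= Defs.Dplus Gp Gm x <= (1 + rho) * Gm (- x).
Proof.
  intro hr.
  destruct (Gm_left_tail _ _ law (rho / (1 + rho)) ltac:(apply Rdiv_lt_0_compat; lra)) as [M HM].
  exists (Rmax (- ln rho) (- M)). intros x hx.
  pose proof (Rmax_l (- ln rho) (- M)). pose proof (Rmax_r (- ln rho) (- M)).
  pose proof (Gm_bounds (- x)).
  assert (exp (- x) <= rho) by (rewrite <- (exp_ln rho) by lra; apply exp_le_compat; lra).
  pose proof (HM (- x) ltac:(lra)) as hsmall.
  assert ((1 + rho) * Gm (- x) < rho).
  { apply (Rmult_lt_compat_l (1 + rho)) in hsmall; [| lra].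
    replace ((1 + rho) * (rho / (1 + rho))) with rho in hsmall by (field; lra). lra. }
  pose proof (Dplus_ge x). pose proof (Dplus_le x). split; [nra |].
  enough (Gm (- x) / (1 - Gm (- x)) <= (1 + rho) * Gm (- x)) by lra.
  apply (Rmult_le_reg_r (1 - Gm (- x))); [lra |]. field_simplify; [| lra].
  assert (0 <= Gm (- x) * (rho - (1 + rho) * Gm (- x))) by (apply Rmult_le_pos; lra).
  nra.
Qed.

Lemma herd_iter_ge x0 n : x0 <= Nat.iter n (step (Defs.Dplus Gp Gm)) x0.
Proof.
  induction n as [| n IH]; [simpl; lra |]. rewrite Nat.iter_succ.
  set (y := Nat.iter n (step (Defs.Dplus Gp Gm)) x0) in *.
  pose proof (Dplus_pos y). unfold step. lra.
Qed.

Lemma herd_iter_unbounded x0 B : exists n, B <= Nat.iter n (step (Defs.Dplus Gp Gm)) x0.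
Proof.
  set (x := fun n => Nat.iter n (step (Defs.Dplus Gp Gm)) x0).
  set (g := Rmin (gap (- B)) (gap (- x0))).
  assert (hg : 0 < g) by (unfold g; apply Rmin_case; apply gap_pos).
  assert (H : forall n, B <= x n \/ x0 + INR n * g <= x n).
  { induction n as [| n IH]; [right; simpl; lra |].
    pose proof (Dplus_pos (x n)). pose proof (herd_iter_ge x0 n) as hx. fold (x n) in hx.
    change (x (S n)) with (step (Defs.Dplus Gp Gm) (x n)). unfold step.
    destruct (Rle_dec B (x n)); [left; lra |].
    destruct IH as [IH | IH]; [lra |]. right.
    pose proof (Dplus_ge_gap (x n)).
    pose proof (gap_ge_min (- B) (- x0) (- x n) ltac:(lra)) as hgap. fold g in hgap.
    rewrite S_INR. lra. }
  destruct (INR_archimed g (B - x0) hg) as [n hn].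
  exists n. change (B <= x n). destruct (H n); lra.
Qed.

Lemma ell_in_herd a N0 n : (N0 <= n)%nat -> (forall i, (N0 <= i < n)%nat -> a i = true) ->
  ell Gp Gm a n = Nat.iter (n - N0) (step (Defs.Dplus Gp Gm)) (ell Gp Gm a N0).
Proof.
  induction n as [| n IH]; intros h H.
  - replace N0 with 0%nat by lia. reflexivity.
  - destruct (Nat.eq_dec N0 (S n)) as [-> | hne]; [rewrite Nat.sub_diag; reflexivity |].
    replace (S n - N0)%nat with (S (n - N0)) by lia. simpl.
    rewrite <- IH by (intros; try apply H; lia). rewrite (H n) by lia. reflexivity.
Qed.

Lemma ell_firstn s N0 : (N0 <= length s)%nat ->
  ell Gp Gm (seq_fun s) N0 = hist_ell (firstn N0 s).
Proof.
  intro h. unfold hist_ell. rewrite length_firstn, Nat.min_l by lia.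
  apply ell_ext. intros i hi. unfold seq_fun. rewrite nth_firstn.
  replace (i <? N0)%nat with true by (symmetry; apply Nat.ltb_lt; auto). reflexivity.
Qed.

Section Herding.

Variables (f : R -> R) (T xc : R).
Hypothesis Gm_convex : forall x y l, x < xc -> y < xc -> 0 <= l <= 1 ->
  Gm (l * x + (1 - l) * y) <= l * Gm x + (1 - l) * Gm y.
Hypothesis f_pos : forall t, 0 < t -> 0 < f t.
Hypothesis f_ode : forall t, T < t -> derivable_pt_lim f t (Gm (- f t)).

Lemma herd_ratio_uniform eps N0 : 0 < eps ->
  exists K, forall s, length s = N0 -> forall m, (K <= m)%nat ->
    Rabs (Nat.iter m (step (Defs.Dplus Gp Gm)) (hist_ell s) / f (INR m + (INR N0 + 1)) - 1) <= eps.
Proof.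
  intro heps.
  destruct (uniform_eventually_in (all_seqs N0) (fun s m =>
    Rabs (Nat.iter m (step (Defs.Dplus Gp Gm)) (hist_ell s) / f (INR m + (INR N0 + 1)) - 1) <= eps))
    as [K HK].
  { intros s _.
    apply (iter_step_ratio_tends_to_one (fun x => Gm (- x)) f T) with (x1 := - xc); auto.
    - intro x. apply Gm_bounds.
    - intros x y hxy. apply (Gm_mono _ _ law). lra.
    - intros x y l hx hy hl.
      replace (- (l * x + (1 - l) * y)) with (l * - x + (1 - l) * - y) by ring.
      apply Gm_convex; lra.
    - apply Dplus_equiv.
    - intros e he. destruct (Gm_left_tail _ _ law e he) as [M HM].
      exists (- M). intros x hx. apply HM. lra.
    - apply herd_iter_unbounded. }
  exists K. intros s hs. apply HK, in_all_seqs, hs.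
Qed.

Section Deviation.

Variables (eps : R) (N0 K : nat).
Hypothesis herd_close : forall s, length s = N0 -> forall m, (K <= m)%nat ->
  Rabs (Nat.iter m (step (Defs.Dplus Gp Gm)) (hist_ell s) / f (INR m + (INR N0 + 1)) - 1) <= eps.

Lemma no_deviation_in_herd M s : length s = M -> has_minus_from N0 s = false ->
  deviates_between Gp Gm f eps (seq_fun s) (N0 + K) M = false.
Proof.
  intros hs hherd.
  destruct (deviates_between Gp Gm f eps (seq_fun s) (N0 + K) M) eqn:hdev; auto. exfalso.
  apply existsb_exists in hdev. destruct hdev as [n [hn hd]]. apply in_seq in hn.
  unfold deviates in hd. destruct Rlt_dec as [hlt |]; [| discriminate].
  rewrite (ell_in_herd (seq_fun s) N0 n) in hlt
    by (try intros i hi; try apply (has_minus_from_false N0 s i hherd); lia).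
  rewrite ell_firstn in hlt by lia.
  pose proof (herd_close (firstn N0 s) ltac:(rewrite length_firstn; lia) (n - N0) ltac:(lia)).
  replace (INR (n - N0) + (INR N0 + 1)) with (INR (S n)) in H
    by (rewrite S_INR, minus_INR by lia; ring).
  lra.
Qed.

Lemma prob_deviation_le L M : (N0 + K <= M)%nat ->
  prob M (fun s => deviates_between Gp Gm f eps (seq_fun s) (N0 + K) M = true) <=
  exp (- L) + prob N0 (fun s => - L < hist_ell s <= L) + exp (- L).
Proof.
  intro hM.
  pose proof (prob_herd_broken N0 L M ltac:(lia)).
  eapply Rle_trans; [apply (prob_union M _ (fun s => ell Gp Gm (seq_fun s) N0 <= L)
    (fun s => L < ell Gp Gm (seq_fun s) N0 /\ has_minus_from N0 s = true)) |].
  { intros s hs hdev. destruct (Rle_dec (ell Gp Gm (seq_fun s) N0) L); [left; lra | right].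
    split; [lra |]. destruct (has_minus_from N0 s) eqn:e; auto.
    rewrite no_deviation_in_herd in hdev; auto. }
  enough (prob M (fun s => ell Gp Gm (seq_fun s) N0 <= L) <=
          exp (- L) + prob N0 (fun s => - L < hist_ell s <= L)) by lra.
  eapply Rle_trans; [apply (prob_union M _ (fun s => ell Gp Gm (seq_fun s) N0 <= - L)
    (fun s => - L < ell Gp Gm (seq_fun s) N0 <= L)) |].
  { intros s _ h. destruct (Rle_dec (ell Gp Gm (seq_fun s) N0) (- L)); [left | right]; lra. }
  unfold prob.
  rewrite (Ex_prefix N0 M (fun x => indicator (x <= - L))),
    (Ex_prefix N0 M (fun x => indicator (- L < x <= L))) by lia.
  pose proof (prob_ell_le_neg N0 L). unfold prob in *. lra.
Qed.

End Deviation.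

End Herding.

End Model.

Theorem theorem3 (Gp Gm f : R -> R) :
  is_cdf Gp -> is_cdf Gm -> llr_pair Gp Gm -> unbounded_signals Gp Gm ->
  continuity Gp -> continuity Gm ->
  left_tail_convex_differentiable Gm ->
  (forall t, 0 < t -> 0 < f t) ->
  (exists T, 0 < T /\ forall t, T < t -> derivable_pt_lim f t (Gm (- f t))) ->
  ratio_tends_to_one_as Gp Gm f.
Proof.
  intros cdf_p cdf_m llr unbounded _ _ [xc [Gm_convex _]] f_pos [T [_ f_ode]] eps heps delta hdelta.
  pose proof (signal_law_of_cdfs Gp Gm cdf_p cdf_m llr unbounded) as law.
  set (L := - ln (delta / 3)).
  assert (hL : exp (- L) = delta / 3) by (unfold L; rewrite Ropp_involutive, exp_ln; lra).
  destruct (learning Gp Gm law L (delta / 3) ltac:(lra)) as [N0 hN0].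
  destruct (herd_ratio_uniform Gp Gm law f T xc Gm_convex f_pos f_ode eps N0 heps) as [K HK].
  exists (N0 + K)%nat. intros M hM.
  rewrite prob_deviation_eq.
  pose proof (prob_deviation_le Gp Gm law f eps N0 K HK L M hM). lra.
Qed.
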